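(* Let $G$ be a weighted finite graph, $F:V\to\mathbb{R}^k$ a map, $S\subseteq V$, and $0<\epsilon<2$. Define $\theta:V\to\mathbb{R}$ by $\theta(v)=0$ if $F(v)=0$ and $\theta(v)=\max\{0,1-\overline{d}_F(v,S\cap\widetilde{V}_F)/\epsilon\}$ otherwise, and set $\Psi:=\theta\cdot F:V\to\mathbb{R}^k$. Then for every edge $\{u,v\}\in E$, \[ \|\Psi(u)+\Psi(v)\|\leq\left(1+\frac{2}{\epsilon}\right)\|F(u)+F(v)\|. \]
   Context: $G=(V,E,w)$ is a finite undirected graph without self-loops with positive symmetric edge weights. $\|\cdot\|$ is the Euclidean norm on $\mathbb{R}^k$. $\widetilde{V}_F:=\{v\in V:F(v)\neq0\}$ and for $u,v\in\widetilde{V}_F$, \[ \overline{d}_F(u,v):=\min\left\{\left\|\tfrac{F(u)}{\|F(u)\|}-\tfrac{F(v)}{\|F(v)\|}\right\|,\left\|\tfrac{F(u)}{\|F(u)\|}+\tfrac{F(v)}{\|F(v)\|}\right\|\right\}; \] for $T\subseteq\widetilde{V}_F$, $\overline{d}_F(v,T):=\inf_{t\in T}\overline{d}_F(v,t)$ (with the convention $\inf\emptyset=+\infty$). *)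

From mathcomp Require Import all_boot all_order all_algebra.
From mathcomp Require Import reals constructive_ereal.
Set Implicit Arguments. Unset Strict Implicit. Unset Printing Implicit Defensive.
Import Order.TTheory GRing.Theory Num.Theory.
Local Open Scope ring_scope.

Section Defs.
Variables (R : realType) (V : finType) (k : nat).

Definition enorm (x : 'rV[R]_k) : R := Num.sqrt (\sum_(i < k) x 0 i ^+ 2).

Definition normalize (x : 'rV[R]_k) : 'rV[R]_k := (enorm x)^-1 *: x.

Definition Vtilde (F : V -> 'rV[R]_k) : {set V} := [set v | F v != 0].

Definition dbar (F : V -> 'rV[R]_k) (u v : V) : R :=
  Num.min (enorm (normalize (F u) - normalize (F v)))
          (enorm (normalize (F u) + normalize (F v))).

(* \overline d_F(v,T) = inf_{t in T} \overline d_F(v,t), with inf of empty set = +oo *)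
Definition dbar_set (F : V -> 'rV[R]_k) (v : V) (T : {set V}) : \bar R :=
  \big[Order.min/+oo%E]_(t in T) (dbar F v t)%:E.

(* theta(v) = 0 if F v = 0, else max{0, 1 - dbar_F(v, S ∩ Vtilde_F)/eps}
   (computed in the extended reals; the result is always finite). *)
Definition theta (F : V -> 'rV[R]_k) (S : {set V}) (eps : R) (v : V) : R :=
  if F v == 0 then 0
  else fine (Order.max 0%E (1%E - dbar_set F v (S :&: Vtilde F) * (eps^-1)%:E)%E).

Definition Psi (F : V -> 'rV[R]_k) (S : {set V}) (eps : R) (v : V) : 'rV[R]_k :=
  theta F S eps v *: F v.

End Defs.

Definition weighted_graph (R : realType) (V : finType) (E : rel V) (w : V -> V -> R) : Prop :=
  (forall u v, E u v = E v u) /\ (forall v, ~~ E v v) /\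
  (forall u v, E u v -> 0 < w u v) /\ (forall u v, w u v = w v u).

(* Write a = theta u, b = theta v, x = F u, y = F v with |x| <= |y|.  Then
   a x + b y = b (x + y) + (a - b) x, and |a - b| <= dbar_F(u,v) / eps because
   theta is a clipped affine function of the distance to S, which is
   1-Lipschitz for dbar_F.  The remaining term is paid for by
   |x| dbar_F(u,v) <= |x| |x/|x| + y/|y|| <= 2 |x + y|: two vectors whose sum
   is short point in nearly opposite directions, unless the shorter one is
   itself short compared with the sum. *)

From mathcomp Require Import all_boot all_order all_algebra.
From mathcomp Require Import reals constructive_ereal.
From mathcomp Require Import ring lra.
Import Order.TTheory GRing.Theory Num.Theory.
Local Open Scope ring_scope.

Lemma ramp_lipschitz {R : realDomainType} (p q : R) :
  `|Num.max 0 (1 - p) - Num.max 0 (1 - q)| <= `|p - q|.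
Proof.
have := ler_norm (p - q); have := ler_norm (q - p); rewrite distrC.
rewrite !maxEle ler_norml => ? ?.
by case: (leP 0 (1 - p)) => ?; case: (leP 0 (1 - q)) => ?; apply/andP; split; lra.
Qed.

Section RowVectors.
Variables (R : realType) (k : nat).
Implicit Types (x y z : 'rV[R]_k).

Definition dot x y : R := \sum_(i < k) x 0 i * y 0 i.

Lemma dotC x y : dot x y = dot y x.
Proof. by apply: eq_bigr => i _; rewrite mulrC. Qed.

Lemma dotDl x y z : dot (x + y) z = dot x z + dot y z.
Proof. by rewrite /dot -big_split; apply: eq_bigr => i _; rewrite mxE mulrDl. Qed.

Lemma dotZl a x y : dot (a *: x) y = a * dot x y.
Proof. by rewrite /dot mulr_sumr; apply: eq_bigr => i _; rewrite mxE mulrA. Qed.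

Lemma dotNl x y : dot (- x) y = - dot x y.
Proof. by rewrite -scaleN1r dotZl mulN1r. Qed.

Lemma dotDr x y z : dot x (y + z) = dot x y + dot x z.
Proof. by rewrite dotC dotDl !(dotC x). Qed.

Lemma dotZr a x y : dot x (a *: y) = a * dot x y.
Proof. by rewrite dotC dotZl dotC. Qed.

Lemma dotNr x y : dot x (- y) = - dot x y.
Proof. by rewrite dotC dotNl dotC. Qed.

Lemma dot0l y : dot 0 y = 0.
Proof. by rewrite -(scale0r 0) dotZl mul0r. Qed.

Lemma dotxx_ge0 x : 0 <= dot x x.
Proof. by apply: sumr_ge0 => i _; rewrite -expr2 sqr_ge0. Qed.

Lemma enormE x : enorm x = Num.sqrt (dot x x).
Proof. by congr Num.sqrt; apply: eq_bigr => i _; rewrite expr2. Qed.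

Lemma enorm_ge0 x : 0 <= enorm x.
Proof. exact: sqrtr_ge0. Qed.

Lemma sqr_enorm x : enorm x ^+ 2 = dot x x.
Proof. by rewrite enormE sqr_sqrtr // dotxx_ge0. Qed.

Lemma enorm_eq0 x : (enorm x == 0) = (x == 0).
Proof.
apply/idP/eqP => [|->]; last by rewrite enormE dot0l sqrtr0.
rewrite enormE sqrtr_eq0 => dot_le0.
have /psumr_eq0P x2_eq0 : dot x x = 0 by apply/eqP; rewrite eq_le dot_le0 dotxx_ge0.
apply/matrixP => i j; rewrite mxE (ord1 i).
have /eqP := x2_eq0 (fun l _ => sqr_ge0 (x 0 l)) j isT.
by rewrite mulf_eq0 orbb => /eqP.
Qed.

Lemma enorm_gt0 {x} : x != 0 -> 0 < enorm x.
Proof. by move=> x_neq0; rewrite lt_def enorm_eq0 x_neq0 enorm_ge0. Qed.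

Lemma dot_le_enormM x y : dot x y <= enorm x * enorm y.
Proof.
have [->|x_neq0] := eqVneq x 0; first by rewrite dot0l mulr_ge0 ?enorm_ge0.
have [->|y_neq0] := eqVneq y 0; first by rewrite dotC dot0l mulr_ge0 ?enorm_ge0.
have a_gt0 := enorm_gt0 x_neq0; have b_gt0 := enorm_gt0 y_neq0.
set a := enorm x in a_gt0 *; set b := enorm y in b_gt0 *.
(* expand 0 <= |b x - a y|^2 = 2 a b (a b - <x, y>) *)
have := dotxx_ge0 (b *: x - a *: y).
rewrite !(dotDl, dotDr, dotNl, dotNr, dotZl, dotZr) -!sqr_enorm -/a -/b (dotC y x).
move=> sqr_ge0.
have : 0 <= a * b * (2 * (a * b - dot x y)) by nra.
by rewrite pmulr_rge0 ?mulr_gt0 //; lra.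
Qed.

Lemma enormD_le x y : enorm (x + y) <= enorm x + enorm y.
Proof.
have sqr_enormD : enorm (x + y) ^+ 2 = enorm x ^+ 2 + 2 * dot x y + enorm y ^+ 2.
  by rewrite !sqr_enorm !(dotDl, dotDr) (dotC y x); ring.
have := dot_le_enormM x y.
have := enorm_ge0 (x + y); have := enorm_ge0 x; have := enorm_ge0 y.
nra.
Qed.

Lemma enormZ a x : enorm (a *: x) = `|a| * enorm x.
Proof. by rewrite !enormE dotZl dotZr mulrA -expr2 sqrtrM ?sqr_ge0 // sqrtr_sqr. Qed.

Lemma enormN x : enorm (- x) = enorm x.
Proof. by rewrite -scaleN1r enormZ normrN normr1 mul1r. Qed.

Definition pdist x y : R :=
  Num.min (enorm (normalize x - normalize y)) (enorm (normalize x + normalize y)).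

Lemma pdist_ge0 x y : 0 <= pdist x y.
Proof. by rewrite le_min !enorm_ge0. Qed.

Lemma pdistC x y : pdist x y = pdist y x.
Proof. by rewrite /pdist; congr Num.min; [rewrite -enormN opprB | rewrite addrC]. Qed.

Lemma pdist_le_enormD x y : pdist x y <= enorm (normalize x + normalize y).
Proof. by rewrite ge_min lexx orbT. Qed.

Lemma pdist_triangle x y z : pdist x z <= pdist x y + pdist y z.
Proof.
rewrite /pdist; set p := normalize x; set q := normalize y; set r := normalize z.
have t1 : enorm (p - r) <= enorm (p - q) + enorm (q - r).
  by have := enormD_le (p - q) (q - r); rewrite addrA subrK.
have t2 : enorm (p + r) <= enorm (p - q) + enorm (q + r).
  by have := enormD_le (p - q) (q + r); rewrite addrA subrK.
have t3 : enorm (p + r) <= enorm (p + q) + enorm (q - r).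
  by have := enormD_le (p + q) (- (q - r)); rewrite enormN opprB addrAC addrA subrK.
have t4 : enorm (p - r) <= enorm (p + q) + enorm (q + r).
  by have := enormD_le (p + q) (- (q + r)); rewrite enormN opprD addrA addrK.
rewrite !minEle.
case: (leP (enorm (p - r))) => ?; case: (leP (enorm (p - q))) => ?;
  case: (leP (enorm (q - r))) => ?; lra.
Qed.

Lemma pdist_enorm_le x y : enorm x <= enorm y ->
  pdist x y * enorm x <= 2 * enorm (x + y).
Proof.
have [->|x_neq0 le_xy] := eqVneq x 0.
  by rewrite enormE dot0l sqrtr0 mulr0 mulr_ge0 ?enorm_ge0.
have a_gt0 := enorm_gt0 x_neq0.
have b_gt0 : 0 < enorm y by apply: lt_le_trans le_xy.
set a := enorm x in a_gt0 le_xy *; set b := enorm y in b_gt0 le_xy *.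
have rescale : a *: (normalize x + normalize y) = (x + y) - (1 - a / b) *: y.
  by apply/matrixP => i j; rewrite /normalize !mxE -/a -/b; field; rewrite !gt_eqF.
have sum_le : a * enorm (normalize x + normalize y) <= enorm (x + y) + (b - a).
  rewrite -[a in a * _](ger0_norm (ltW a_gt0)) -enormZ rescale.
  apply: le_trans (enormD_le _ _) _; rewrite enormN enormZ ger0_norm.
    by rewrite lerD2l mulrBl mul1r divfK ?gt_eqF.
  by rewrite subr_ge0 ler_pdivrMr // mul1r.
have b_le : b <= enorm (x + y) + a.
  by have := enormD_le (x + y) (- x); rewrite enormN addrC addKr.
have := pdist_le_enormD x y; have := pdist_ge0 x y; nra.
Qed.

Lemma enorm_scaleD_le_ordered x y (a b eps : R) : 0 < eps -> 0 <= b <= 1 ->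
  enorm x <= enorm y -> `|a - b| <= pdist x y / eps ->
  enorm (a *: x + b *: y) <= (1 + 2 / eps) * enorm (x + y).
Proof.
move=> eps_gt0 /andP[b_ge0 b_le1] le_xy le_ab.
have -> : a *: x + b *: y = b *: (x + y) + (a - b) *: x.
  by apply/matrixP => i j; rewrite !mxE; ring.
apply: le_trans (enormD_le _ _) _; rewrite !enormZ (ger0_norm b_ge0).
have scaled : pdist x y / eps * enorm x <= 2 / eps * enorm (x + y).
  rewrite mulrAC [2 / eps * _]mulrAC ler_wpM2r ?pdist_enorm_le //.
  by rewrite invr_ge0 ltW.
have := ler_wpM2r (enorm_ge0 x) le_ab.
have := enorm_ge0 (x + y); nra.
Qed.

Lemma enorm_scaleD_le x y (a b eps : R) : 0 < eps ->
  0 <= a <= 1 -> 0 <= b <= 1 -> (x = 0 -> a = 0) -> (y = 0 -> b = 0) ->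
  (x != 0 -> y != 0 -> `|a - b| <= pdist x y / eps) ->
  enorm (a *: x + b *: y) <= (1 + 2 / eps) * enorm (x + y).
Proof.
move=> eps_gt0.
wlog le_xy : x y a b / enorm x <= enorm y => [hwlog|].
  have [|/ltW le_yx] := leP (enorm x) (enorm y); first exact: hwlog.
  move=> a01 b01 xa ya le_ab; rewrite addrC [x + y]addrC.
  by apply: hwlog => // y_neq0 x_neq0; rewrite distrC pdistC le_ab.
move=> _ b01 xa _ le_ab.
have [x0|x_neq0] := eqVneq x 0.
  rewrite (xa x0) x0 scale0r !add0r enormZ.
  have := enorm_ge0 y; have : 0 <= 2 / eps by rewrite divr_ge0 ?ltW.
  case/andP: b01 => b_ge0 b_le1; rewrite ger0_norm //; nra.
apply: enorm_scaleD_le_ordered => //; apply: le_ab => //.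
by rewrite -enorm_eq0 gt_eqF // (lt_le_trans _ le_xy) ?enorm_gt0.
Qed.

Section Theta.
Variables (V : finType) (F : V -> 'rV[R]_k) (S : {set V}) (eps : R).
Hypothesis eps_gt0 : 0 < eps.
Let T := S :&: Vtilde F.

Lemma dbarE u v : dbar F u v = pdist (F u) (F v).
Proof. by []. Qed.

Lemma dbar_set_le v t : t \in T -> (dbar_set F v T <= (dbar F v t)%:E)%E.
Proof. exact: bigmin_le_cond. Qed.

Lemma dbar_set_attained v : T != set0 ->
  exists2 t0, t0 \in T & dbar_set F v T = (dbar F v t0)%:E.
Proof.
case/set0Pn=> t tT; rewrite /dbar_set (bigmin_eq_arg _ t) // => [|i _]; last exact: leey.
by case: arg_minP => // t0 t0T _; exists t0.
Qed.

Lemma theta_eq0 v : F v = 0 -> theta F S eps v = 0.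
Proof. by rewrite /theta => ->; rewrite eqxx. Qed.

Lemma theta_set0 v : T = set0 -> theta F S eps v = 0.
Proof.
move=> T0; rewrite /theta -/T /dbar_set T0 big_set0.
by rewrite gt0_mulye ?lte_fin ?invr_gt0 // if_same.
Qed.

Lemma thetaE {v t} : F v != 0 -> dbar_set F v T = (dbar F v t)%:E ->
  theta F S eps v = Num.max 0 (1 - dbar F v t / eps).
Proof.
by move=> Fv_neq0 dvt; rewrite /theta (negbTE Fv_neq0) -/T dvt -EFinM -EFinB -EFin_max.
Qed.

Lemma theta_ge0_le1 v : 0 <= theta F S eps v <= 1.
Proof.
have [Fv0|Fv_neq0] := eqVneq (F v) 0; first by rewrite theta_eq0 ?lexx ?ler01.
have [T0|T_neq0] := eqVneq T set0; first by rewrite theta_set0 ?lexx ?ler01.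
have [t0 _ dvt0] := dbar_set_attained v T_neq0.
rewrite (thetaE Fv_neq0 dvt0) le_max lexx ge_max ler01 lerBlDr lerDl.
by rewrite /= dbarE divr_ge0 ?pdist_ge0 ?ltW.
Qed.

Lemma theta_lipschitz u v : F u != 0 -> F v != 0 ->
  `|theta F S eps u - theta F S eps v| <= dbar F u v / eps.
Proof.
move=> Fu_neq0 Fv_neq0.
have [T0|T_neq0] := eqVneq T set0.
  by rewrite !theta_set0 // subrr normr0 dbarE divr_ge0 ?pdist_ge0 ?ltW.
have [t0 t0T dut0] := dbar_set_attained u T_neq0.
have [t1 t1T dvt1] := dbar_set_attained v T_neq0.
rewrite (thetaE Fu_neq0 dut0) (thetaE Fv_neq0 dvt1).
apply: le_trans (ramp_lipschitz _ _) _.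
rewrite -mulrBl normrM [`|eps^-1|]gtr0_norm ?invr_gt0 // ler_pM2r ?invr_gt0 //.
have := dbar_set_le u t1 t1T; rewrite dut0 lee_fin.
have := dbar_set_le v t0 t0T; rewrite dvt1 lee_fin.
have := pdist_triangle (F u) (F v) (F t1).
have := pdist_triangle (F v) (F u) (F t0).
rewrite [pdist (F v) (F u)]pdistC !dbarE => ? ? ? ?.
rewrite ler_norml; apply/andP; split; lra.
Qed.

End Theta.

End RowVectors.

Theorem lemma5p3 (R : realType) (V : finType) (E : rel V) (w : V -> V -> R)
  (k : nat) (F : V -> 'rV[R]_k) (S : {set V}) (eps : R) :
  weighted_graph E w -> 0 < eps -> eps < 2 ->
  forall u v, E u v ->
    enorm (Psi F S eps u + Psi F S eps v) <= (1 + 2 / eps) * enorm (F u + F v).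
Proof.
(* The bound holds for any two vertices and any eps > 0. *)
move=> _ eps_gt0 _ u v _.
apply: enorm_scaleD_le => //.
- exact: theta_ge0_le1.
- exact: theta_ge0_le1.
- exact: theta_eq0.
- exact: theta_eq0.
- exact: theta_lipschitz.
Qed.
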